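(* Let $G=(m,n,\boldsymbol{c},\boldsymbol{d},r_{\max},r_{\min})$ be an interbank lending game whose lenders are indexed so that $c_1\le c_2\le\dots\le c_m$. Set $c_{m+1}=\infty$, $D=\sum_{k\in B}d_k$, and let $\bar m$ be the least index in $\{0,1,\dots,m\}$ such that $$c_{\bar m+1}>\frac{1}{m-\bar m+1}\Bigl(D-\sum_{\ell=1}^{\bar m}c_\ell\Bigr).$$ Let $\bar L=\{1,\dots,\bar m\}$ and $q=\frac{1}{m-\bar m+1}\bigl(1-\frac{\sum_{\ell\in\bar L}c_\ell}{D}\bigr)$. Define $\boldsymbol{s}^*$ by $s^*_{ij}=\frac{c_i}{D}d_j$ for $i\in\bar L$, $j\in B$, and $s^*_{ij}=q\,d_j$ for $i\in L\setminus\bar L$, $j\in B$; and define multipliers $\mu_i=(r_{\min}-r_{\max})\bigl(\frac{c_i}{D}-q\bigr)$ for $i\in\bar L$, $\mu_i=0$ for $i\in L\setminus\bar L$, and $\mu_{ij}=0$ for all $i\in L,j\in B$. Then $(\boldsymbol{s}^*,\boldsymbol{\mu})$ satisfies all of the following Karush–Kuhn–Tucker conditions for the problem of maximising $\Phi(\boldsymbol{s})$ subject to $\sum_{j\in B}s_{ij}\le c_i$ ($i\in L$) and $s_{ij}\ge0$ ($i\in L,j\in B$): (1) primal feasibility: $\sum_{j\in B}s^*_{ij}\le c_i$ and $s^*_{ij}\ge0$ for all $i,j$; (2) stationarity: for all $i\in L,j\in B$, $(r_{\min}-r_{\max})\bigl(\frac{1}{d_j}(s^*_{ij}+\sum_{k\in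 L}s^*_{kj})-1\bigr)-\mu_i+\mu_{ij}=0$ (the first term being $\partial\Phi/\partial s_{ij}$ at $\boldsymbol{s}^*$); (3) dual feasibility: $\mu_i\ge0$ and $\mu_{ij}\ge0$ for all $i,j$; (4) complementary slackness: $\mu_i(c_i-\sum_{j\in B}s^*_{ij})=0$ and $\mu_{ij}s^*_{ij}=0$ for all $i,j$. Consequently, $\boldsymbol{s}^*$ is the unique pure Nash equilibrium of $G$.
   Context: An interbank lending game $G=(m,n,\boldsymbol{c},\boldsymbol{d},r_{\max},r_{\min})$ consists of positive integers $m,n$, budgets $\boldsymbol{c}\in\mathbb{R}_{>0}^m$, demands $\boldsymbol{d}\in\mathbb{R}_{>0}^n$ and reals $0<r_{\min}<r_{\max}$. The players are the lenders $L=\{1,\dots,m\}$; $B=\{1,\dots,n\}$ is the set of borrowers. Lender $i$'s strategy set is $S_i=\{s_i\in\mathbb{R}_{\ge0}^n:\sum_{j\in B}s_{ij}\le c_i\}$, the strategy space is $\boldsymbol{S}=\prod_{i\in L}S_i$ with elements $\boldsymbol{s}=(s_{ij})$. The interest rate of borrower $j$ is $r_j(\boldsymbol{s})=(r_{\min}-r_{\max})\frac{\sum_{i\in L}s_{ij}}{d_j}+r_{\max}$ and lender $i$'s utility is $u_i(\boldsymbol{s})=\sum_{j\in B}(r_j(\boldsymbol{s})-r_{\min})s_{ij}$. A pure Nash equilibrium is $\boldsymbol{s}^*\in\boldsymbol{S}$ with $u_i(\boldsymbol{s}^* )\ge u_i(s_i,\boldsymbol{s}^*_{-i})$ for all $i\in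 L$, $s_i\in S_i$. The potential function is $$\Phi(\boldsymbol{s})=\sum_{j\in B}\sum_{i\in L}\Bigl((r_{\min}-r_{\max})\frac{\sum_{\ell=1}^{i}s_{\ell j}}{d_j}+r_{\max}-r_{\min}\Bigr)s_{ij},$$ equivalently $\Phi(\boldsymbol{s})=\sum_{j\in B}\Bigl(\frac{r_{\min}-r_{\max}}{2d_j}\bigl(\sum_{i}s_{ij}^2+(\sum_i s_{ij})^2\bigr)+(r_{\max}-r_{\min})\sum_i s_{ij}\Bigr)$. *)

(* Lenders are indexed by 'I_m (0-based: paper's lender i is ord i-1),
   borrowers by 'I_n; strategy profiles are m x n matrices s with s i j = s_{ij}. *)
From HB Require Import structures.
From mathcomp Require Import all_boot all_order all_algebra.
Set Implicit Arguments. Unset Strict Implicit. Unset Printing Implicit Defensive.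
Import Order.TTheory GRing.Theory Num.Theory.
Local Open Scope ring_scope.

Section Game.
Variables (R : realFieldType) (m n : nat).
Variables (c : 'I_m -> R) (d : 'I_n -> R) (rmax rmin : R).

Definition rate (s : 'M[R]_(m, n)) (j : 'I_n) : R :=
  (rmin - rmax) * ((\sum_(i < m) s i j) / d j) + rmax.

Definition utility (i : 'I_m) (s : 'M[R]_(m, n)) : R :=
  \sum_(j < n) (rate s j - rmin) * s i j.

Definition strategy_ok (i : 'I_m) (t : 'I_n -> R) : Prop :=
  (forall j, 0 <= t j) /\ \sum_(j < n) t j <= c i.

Definition profile_ok (s : 'M[R]_(m, n)) : Prop :=
  forall i, strategy_ok i (fun j => s i j).

Definition deviate (s : 'M[R]_(m, n)) (i : 'I_m) (t : 'I_n -> R) : 'M[R]_(m, n) :=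
  \matrix_(k, j) if k == i then t j else s k j.

Definition pure_NE (s : 'M[R]_(m, n)) : Prop :=
  profile_ok s /\
  forall i t, strategy_ok i t -> utility i (deviate s i t) <= utility i s.

Definition Dtot : R := \sum_(k < n) d k.

(* sum_{l=1}^{k} c_l (paper indexing) *)
Definition csum (k : nat) : R := \sum_(l < m | (l < k)%N) c l.

(* the condition defining mbar, for k in {0..m}:
   c_{k+1} > (D - sum_{l<=k} c_l)/(m-k+1), with c_{m+1} = +infinity
   (paper's c_{k+1} is c (ord k) here; vacuous for k = m). *)
Definition mbar_cond (k : nat) : Prop :=
  forall i : 'I_m, nat_of_ord i = k ->
    (Dtot - csum k) / ((m - k).+1)%:R < c i.

Definition qval (mb : nat) : R :=
  (1 - csum mb / Dtot) / ((m - mb).+1)%:R.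

Definition sstar (mb : nat) : 'M[R]_(m, n) :=
  \matrix_(i, j) if (i < mb)%N then c i / Dtot * d j else qval mb * d j.

Definition mu_i (mb : nat) (i : 'I_m) : R :=
  if (i < mb)%N then (rmin - rmax) * (c i / Dtot - qval mb) else 0.

Definition mu_ij (i : 'I_m) (j : 'I_n) : R := 0.

(* partial derivative of Phi wrt s_ij *)
Definition dPhi (s : 'M[R]_(m, n)) (i : 'I_m) (j : 'I_n) : R :=
  (rmin - rmax) * ((s i j + \sum_(k < m) s k j) / d j - 1).

End Game.

(* The utilities are concave quadratics and Phi is a potential, so a profile is
   a pure Nash equilibrium iff it solves the variational inequality of the
   pseudo-gradient dPhi (deviate by a small step towards any strategy).  The
   KKT conditions give this variational inequality for s*, and dPhi is strongly
   monotone: adding the inequalities of two solutions s, s' yields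
   (rmax - rmin) sum_j ((sum_i x_ij)^2 + sum_i x_ij^2) / d_j <= 0 for x = s - s',
   hence uniqueness.
   For the KKT conditions, s*_ij = share_i d_j with shares summing to 1 - q, so
   dPhi at s* only depends on share_i - q.  Minimality of mbar makes the average
   remaining demand (D - c_1 - ... - c_k) / (m - k + 1) nondecreasing in k <= mbar,
   whence c_i <= q D for i <= mbar, while c_i > q D for i > mbar by the choice of
   mbar and monotonicity of c. *)
From HB Require Import structures.
From mathcomp Require Import all_boot all_order all_algebra.
From mathcomp Require Import ring lra.
Import Order.TTheory GRing.Theory Num.Theory.
Local Open Scope ring_scope.

Set Implicit Arguments.
Unset Strict Implicit.
Unset Printing Implicit Defensive.

Lemma ler0_of_forall_mul_small (R : realFieldType) (a b : R) :
  (forall e, 0 < e <= 1 -> a <= e * b) -> a <= 0.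
Proof.
move=> small; rewrite leNgt; apply/negP => a_gt0.
have a_le_b : a <= b by rewrite -[b]mul1r small ?ltr01 ?lexx.
have b_gt0 : 0 < b := lt_le_trans a_gt0 a_le_b.
have e_ok : 0 < a / (2 * b) <= 1.
  by rewrite divr_gt0 ?mulr_gt0 ?ltr0n //= ler_pdivrMr ?mulr_gt0 ?ltr0n //; lra.
have := small _ e_ok; have -> : a / (2 * b) * b = a / 2 by field; rewrite gt_eqF.
lra.
Qed.

Section Game.
Variables (R : realFieldType) (m n : nat).
Variables (c : 'I_m -> R) (d : 'I_n -> R) (rmax rmin : R).
Hypothesis d_gt0 : forall j, 0 < d j.
Hypothesis rmin_lt_rmax : rmin < rmax.

Local Notation dPhi := (dPhi d rmax rmin).
Local Notation utility := (utility d rmax rmin).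
Local Notation pure_NE := (pure_NE c d rmax rmin).

Lemma strategy_ok_lerp i (t1 t2 : 'I_n -> R) e :
  strategy_ok c i t1 -> strategy_ok c i t2 -> 0 <= e <= 1 ->
  strategy_ok c i (fun j => t1 j + e * (t2 j - t1 j)).
Proof.
move=> [t1_ge0 t1_le] [t2_ge0 t2_le] /andP[e01 e_le1]; split.
  move=> j; have := t1_ge0 j; have := t2_ge0 j; nra.
rewrite big_split /= -mulr_sumr sumrB; nra.
Qed.

Lemma sum_col_deviate (s : 'M[R]_(m, n)) i t j :
  \sum_k deviate s i t k j = \sum_k s k j - s i j + t j.
Proof.
rewrite (bigD1 i) //= [X in _ = X - _ + _](bigD1 i) //= !mxE eqxx.
rewrite (eq_bigr (fun k => s k j)) => [|k /negbTE k_neq_i]; first ring.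
by rewrite mxE k_neq_i.
Qed.

(* The own-strategy gradient of the utility is the gradient of the potential. *)
Lemma utility_deviate_sub (s : 'M[R]_(m, n)) i t :
  utility i (deviate s i t) - utility i s =
  \sum_j ((t j - s i j) * dPhi s i j - (rmax - rmin) * (t j - s i j) ^+ 2 / d j).
Proof.
rewrite /utility -sumrB; apply: eq_bigr => j _.
rewrite /rate /dPhi sum_col_deviate mxE eqxx.
by field; rewrite gt_eqF ?d_gt0.
Qed.

Definition var_ineq (s : 'M[R]_(m, n)) :=
  forall i t, strategy_ok c i t -> \sum_j (t j - s i j) * dPhi s i j <= 0.

Lemma var_ineq_KKT s (mu : 'I_m -> R) (nu : 'I_m -> 'I_n -> R) :
  (forall i j, dPhi s i j - mu i + nu i j = 0) ->
  (forall i, 0 <= mu i) -> (forall i j, 0 <= nu i j) ->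
  (forall i, mu i * (c i - \sum_j s i j) = 0) -> (forall i j, nu i j * s i j = 0) ->
  var_ineq s.
Proof.
move=> stat mu_ge0 nu_ge0 mu_slack nu_slack i t [t_ge0 t_le].
apply: (@le_trans _ _ (\sum_j mu i * (t j - s i j))).
  apply: ler_sum => j _; have := stat i j; have := nu_slack i j.
  have := nu_ge0 i j; have := t_ge0 j; nra.
rewrite -mulr_sumr sumrB; have := mu_slack i; have := mu_ge0 i; nra.
Qed.

Lemma pure_NE_var_ineq s : profile_ok c s -> var_ineq s -> pure_NE s.
Proof.
move=> s_ok s_vi; split=> // i t t_ok.
rewrite -subr_le0 utility_deviate_sub sumrB subr_le0.
apply: le_trans (s_vi i t t_ok) _; apply: sumr_ge0 => j _.
apply: divr_ge0; last exact: ltW.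
by rewrite mulr_ge0 ?sqr_ge0 // subr_ge0 ltW.
Qed.

Lemma var_ineq_pure_NE s : pure_NE s -> var_ineq s.
Proof.
move=> [s_ok s_NE] i t t_ok.
set A := \sum_j _; set B := \sum_j (rmax - rmin) * (t j - s i j) ^+ 2 / d j.
apply: (@ler0_of_forall_mul_small _ A B) => e /andP[e_gt0 e_le1].
have e01 : 0 <= e <= 1 by rewrite ltW.
have te_ok := strategy_ok_lerp (s_ok i) t_ok e01.
have := s_NE i _ te_ok; rewrite -subr_le0 utility_deviate_sub.
have -> : \sum_j ((s i j + e * (t j - s i j) - s i j) * dPhi s i j
    - (rmax - rmin) * (s i j + e * (t j - s i j) - s i j) ^+ 2 / d j)
    = e * (A - e * B).
  rewrite /A /B !mulr_sumr -sumrB mulr_sumr; apply: eq_bigr => j _; ring.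
by rewrite pmulr_rle0 // subr_le0.
Qed.

Lemma dPhi_sub (s1 s2 : 'M[R]_(m, n)) i j :
  dPhi s2 i j - dPhi s1 i j =
  (rmax - rmin) * (s1 i j - s2 i j + \sum_k (s1 k j - s2 k j)) / d j.
Proof. by rewrite /dPhi sumrB; field; rewrite gt_eqF ?d_gt0. Qed.

Lemma sum_dPhi_sub (s1 s2 : 'M[R]_(m, n)) :
  \sum_i \sum_j (s1 i j - s2 i j) * (dPhi s2 i j - dPhi s1 i j) =
  (rmax - rmin) * (\sum_j (\sum_i (s1 i j - s2 i j)) ^+ 2 / d j
                   + \sum_i \sum_j (s1 i j - s2 i j) ^+ 2 / d j).
Proof.
rewrite [\sum_i \sum_j _ ^+ 2 / _]exchange_big -big_split exchange_big mulr_sumr.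
apply: eq_bigr => j _ /=.
under eq_bigr => i _ do rewrite dPhi_sub.
set Dl := \sum_k (s1 k j - s2 k j).
rewrite (eq_bigr (fun i => (rmax - rmin) / d j * ((s1 i j - s2 i j) ^+ 2
                              + Dl * (s1 i j - s2 i j)))); last by move=> i _; ring.
by rewrite -mulr_sumr big_split -mulr_sumr -mulr_suml /= -/Dl; ring.
Qed.

Lemma var_ineq_unique s1 s2 : profile_ok c s1 -> profile_ok c s2 ->
  var_ineq s1 -> var_ineq s2 -> s1 = s2.
Proof.
move=> s1_ok s2_ok s1_vi s2_vi.
have sq_ge0 i j : 0 <= (s1 i j - s2 i j) ^+ 2 / d j by rewrite divr_ge0 ?sqr_ge0 ?ltW.
have sum_sq_le0 : \sum_i \sum_j (s1 i j - s2 i j) ^+ 2 / d j <= 0.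
  have : \sum_i \sum_j (s1 i j - s2 i j) * (dPhi s2 i j - dPhi s1 i j) <= 0.
    apply: sumr_le0 => i _.
    rewrite -[X in _ <= X]addr0 (_ : \sum_j _ = \sum_j (s1 i j - s2 i j) * dPhi s2 i j
                                    + \sum_j (s2 i j - s1 i j) * dPhi s1 i j).
      exact: lerD (s2_vi i _ (s1_ok i)) (s1_vi i _ (s2_ok i)).
    by rewrite -big_split; apply: eq_bigr => j _ /=; ring.
  rewrite sum_dPhi_sub pmulr_rle0 ?subr_gt0 //.
  apply: le_trans; rewrite lerDr.
  by apply: sumr_ge0 => j _; rewrite divr_ge0 ?sqr_ge0 ?ltW.
have sum_row_ge0 i : 0 <= \sum_j (s1 i j - s2 i j) ^+ 2 / d j.
  exact: sumr_ge0 (fun j _ => sq_ge0 i j).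
have sum_sq_eq0 : \sum_i \sum_j (s1 i j - s2 i j) ^+ 2 / d j = 0.
  by apply/eqP; rewrite eq_le sum_sq_le0 sumr_ge0.
apply/matrixP => i j; apply/eqP; rewrite -subr_eq0 -sqrf_eq0.
have row_eq0 := psumr_eq0P (fun i _ => sum_row_ge0 i) sum_sq_eq0 (i := i) isT.
have /eqP := psumr_eq0P (fun j _ => sq_ge0 i j) row_eq0 (i := j) isT.
by rewrite mulf_eq0 invr_eq0 (gt_eqF (d_gt0 j)) orbF.
Qed.
End Game.

Lemma Dtot_gt0 (R : realFieldType) n (d : 'I_n -> R) :
  (0 < n)%N -> (forall j, 0 < d j) -> 0 < Dtot d.
Proof.
move=> n_gt0 d_gt0; rewrite /Dtot (bigD1 (Ordinal n_gt0)) //= ltr_wpDr //.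
by apply: sumr_ge0 => j _; apply: ltW.
Qed.

Section Candidate.
Variables (R : realFieldType) (m n : nat).
Variables (c : 'I_m -> R) (d : 'I_n -> R) (rmax rmin : R) (mb : nat).
Hypothesis d_gt0 : forall j, 0 < d j.
Hypothesis D_gt0 : 0 < Dtot d.
Hypothesis rmin_lt_rmax : rmin < rmax.
Hypothesis mb_le_m : (mb <= m)%N.
Hypothesis mb_min : forall k, (k < mb)%N -> ~ mbar_cond c d k.
Hypothesis mb_cond : mbar_cond c d mb.
Hypothesis c_gt0 : forall i, 0 < c i.
Hypothesis c_mono : forall i1 i2 : 'I_m, (i1 <= i2)%N -> c i1 <= c i2.

Local Notation D := (Dtot d).
Local Notation q := (qval c d mb).
Local Notation s := (sstar c d mb).

(* [mbar_cond c d k] reads [rest_avg k < c i] for the lender [i] of index [k]. *)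
Definition rest_avg k := (D - csum c k) / (m - k).+1%:R.

Definition share (i : 'I_m) := if (i < mb)%N then c i / D else q.

Lemma sstarE i j : s i j = share i * d j.
Proof. by rewrite /sstar mxE /share; case: ifP. Qed.

Lemma sum_row_sstar i : \sum_j s i j = share i * D.
Proof. by rewrite /Dtot mulr_sumr; apply: eq_bigr => j _; rewrite sstarE. Qed.

Lemma qvalE : q * D = rest_avg mb.
Proof.
by rewrite /qval /rest_avg; field; rewrite (addrC 1) natr1 pnatr_eq0 (gt_eqF D_gt0).
Qed.

Lemma sum_share : \sum_i share i = 1 - q.
Proof.
have -> : \sum_i share i = \sum_(i < m) q + \sum_(i < m | (i < mb)%N) (c i / D - q).
  rewrite [X in _ + X]big_mkcond -big_split /=; apply: eq_bigr => i _.
  by rewrite /share; case: ifP => _; ring.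
rewrite sumrB [\sum_(i < m | (i < mb)%N) q](big_ord_narrow mb_le_m) !sumr_const !card_ord.
rewrite -mulr_suml -/(csum c mb) addrCA -mulrnBr // /qval -mulr_natr.
by field; rewrite (addrC 1) natr1 pnatr_eq0 (gt_eqF D_gt0).
Qed.

Lemma sum_col_sstar j : \sum_i s i j = (1 - q) * d j.
Proof. by under eq_bigr do rewrite sstarE; rewrite -mulr_suml sum_share. Qed.

Lemma dPhi_sstar i j : dPhi d rmax rmin s i j = (rmin - rmax) * (share i - q).
Proof. by rewrite /dPhi sum_col_sstar sstarE; field; rewrite gt_eqF. Qed.

Lemma mu_iE i : mu_i c d rmax rmin mb i = (rmin - rmax) * (share i - q).
Proof. by rewrite /mu_i /share; case: ifP => // _; rewrite subrr mulr0. Qed.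

Lemma sstar_slack i : mu_i c d rmax rmin mb i * (c i - \sum_j s i j) = 0.
Proof.
rewrite sum_row_sstar /mu_i /share; case: ifP => _; last by rewrite mul0r.
by rewrite divfK ?subrr ?mulr0 ?gt_eqF.
Qed.

Lemma sstar_stationary i j :
  dPhi d rmax rmin s i j - mu_i c d rmax rmin mb i + mu_ij R i j = 0.
Proof. by rewrite dPhi_sstar mu_iE subrr addr0. Qed.

Lemma csum0 : csum c 0 = 0.
Proof. by rewrite /csum big_pred0. Qed.

Lemma csumS k (k_lt : (k < m)%N) : csum c k.+1 = csum c k + c (Ordinal k_lt).
Proof.
rewrite /csum (bigD1 (Ordinal k_lt)) //= addrC; congr (_ + _).
by apply: eq_bigl => l; rewrite -val_eqE /= ltnS; case: ltngtP.
Qed.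

Lemma rest_avg_le_succ k (k_lt : (k < m)%N) :
  c (Ordinal k_lt) <= rest_avg k -> rest_avg k <= rest_avg k.+1.
Proof.
move=> c_le; have mk_gt0 : 0 < (m - k)%:R :> R by rewrite ltr0n subn_gt0.
have avgE : D - csum c k = rest_avg k * ((m - k)%:R + 1).
  by rewrite natr1 divfK // pnatr_eq0.
rewrite {2}/rest_avg csumS subnSK // ler_pdivlMr // opprD addrA avgE; nra.
Qed.

Lemma c_le_rest_avg k (i : 'I_m) : (k < mb)%N -> i = k :> nat -> c i <= rest_avg k.
Proof.
move=> k_lt i_k; rewrite leNgt; apply/negP => avg_lt; apply: (mb_min k_lt) => i' i'_k.
by have -> : i' = i by apply: val_inj => /=; rewrite i'_k i_k.
Qed.

Lemma rest_avg_bounds k : (k <= mb)%N ->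
  0 < rest_avg k /\ forall i : 'I_m, (i < k)%N -> c i <= rest_avg k.
Proof.
elim: k => [_ | k IH k_lt].
  by split=> //; rewrite /rest_avg csum0 subr0 divr_gt0 ?ltr0n.
have k_lt_m : (k < m)%N := leq_trans k_lt mb_le_m.
have [avg_gt0 c_le] := IH (ltnW k_lt).
have step := @rest_avg_le_succ k k_lt_m (c_le_rest_avg (i := Ordinal k_lt_m) k_lt erefl).
split=> [|i]; first exact: lt_le_trans step.
rewrite ltnS leq_eqVlt => /orP[/eqP i_k | i_lt]; apply: le_trans step.
  exact: c_le_rest_avg k_lt i_k.
exact: c_le i i_lt.
Qed.

Lemma share_le_qval i : share i <= q.
Proof.
rewrite /share; case: ifP => // i_lt.
by rewrite ler_pdivrMr // qvalE; apply: (rest_avg_bounds (leqnn mb)).2.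
Qed.

Lemma qval_gt0 : 0 < q.
Proof. by rewrite -(pmulr_lgt0 _ D_gt0) qvalE; apply: (rest_avg_bounds (leqnn mb)).1. Qed.

Lemma mu_i_ge0 i : 0 <= mu_i c d rmax rmin mb i.
Proof. by rewrite mu_iE mulr_le0 // subr_le0 ?share_le_qval // ltW. Qed.

Lemma sum_row_sstar_le i : \sum_j s i j <= c i.
Proof.
rewrite sum_row_sstar /share; case: ifP => [_|/negbT]; first by rewrite divfK ?gt_eqF.
rewrite -leqNgt => mb_le_i; have mb_lt_m := leq_ltn_trans mb_le_i (ltn_ord i).
rewrite qvalE ltW // (lt_le_trans (@mb_cond (Ordinal mb_lt_m) erefl)) //.
exact: c_mono.
Qed.

Lemma sstar_ge0 i j : 0 <= s i j.
Proof.
rewrite sstarE mulr_ge0 ?(ltW (d_gt0 j)) // /share.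
by case: ifP => _; [rewrite divr_ge0 ?ltW | exact: ltW qval_gt0].
Qed.
End Candidate.

Theorem theorem3p4 (R : realFieldType) (m n : nat) (c : 'I_m -> R) (d : 'I_n -> R)
  (rmax rmin : R) (mb : nat) :
  (0 < m)%N -> (0 < n)%N ->
  (forall i, 0 < c i) -> (forall j, 0 < d j) ->
  0 < rmin -> rmin < rmax ->
  (forall i1 i2 : 'I_m, (i1 <= i2)%N -> c i1 <= c i2) ->
  (* mb is the least index in {0,..,m} satisfying the defining condition *)
  (mb <= m)%N -> mbar_cond c d mb ->
  (forall k, (k < mb)%N -> ~ mbar_cond c d k) ->
  let s := sstar c d mb in
  let mu := mu_i c d rmax rmin mb in
  (* (1) primal feasibility *)
  ((forall i, \sum_(j < n) s i j <= c i) /\ (forall i j, 0 <= s i j)) /\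
  (* (2) stationarity *)
  (forall i j, dPhi d rmax rmin s i j - mu i + mu_ij R i j = 0) /\
  (* (3) dual feasibility *)
  ((forall i, 0 <= mu i) /\ (forall (i : 'I_m) (j : 'I_n), 0 <= mu_ij R i j)) /\
  (* (4) complementary slackness *)
  ((forall i, mu i * (c i - \sum_(j < n) s i j) = 0) /\
   (forall (i : 'I_m) (j : 'I_n), mu_ij R i j * s i j = 0)) /\
  (* s is the unique pure Nash equilibrium *)
  pure_NE c d rmax rmin s /\
  (forall s', pure_NE c d rmax rmin s' -> s' = s).
Proof.
move=> _ n_gt0 c_gt0 d_gt0 _ rmin_lt_rmax c_mono mb_le_m mb_cond mb_min s mu.
have D_gt0 := Dtot_gt0 n_gt0 d_gt0.
have row_le i := sum_row_sstar_le D_gt0 mb_cond c_mono i.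
have s_ge0 := sstar_ge0 d_gt0 D_gt0 mb_le_m mb_min c_gt0.
have stat := sstar_stationary c rmax rmin d_gt0 D_gt0 mb_le_m.
have mu_ge0 := mu_i_ge0 D_gt0 rmin_lt_rmax mb_le_m mb_min.
have mu_slack := sstar_slack c rmax rmin mb D_gt0.
have nu_ge0 (i : 'I_m) (j : 'I_n) : 0 <= mu_ij R i j by [].
have nu_slack (i : 'I_m) (j : 'I_n) : mu_ij R i j * s i j = 0 by rewrite mul0r.
have s_ok : profile_ok c s by move=> i; split.
have s_vi : var_ineq c d rmax rmin s := var_ineq_KKT stat mu_ge0 nu_ge0 mu_slack nu_slack.
have s_NE := pure_NE_var_ineq d_gt0 rmin_lt_rmax s_ok s_vi.
do !split=> //.
move=> s' s'_NE; have [s'_ok _] := s'_NE.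
have s'_vi := var_ineq_pure_NE d_gt0 s'_NE.
exact (var_ineq_unique d_gt0 rmin_lt_rmax s'_ok s_ok s'_vi s_vi).
Qed.
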